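(* Consider the delayed online learning protocol described in the context, and assume that delayed dual averaging (DDA) is run with a non-increasing sequence of learning rates $(\eta_t)_{t\in\{1,\dots,T\}}$, $\eta_t>0$. Then for every $p\in\mathcal X$ the generated points $x_1,\dots,x_T$ satisfy \[ R_T(p)\le \frac{h(p)}{\eta_T}+\frac12\sum_{t=1}^T \eta_t\Big(\|g_t\|_*^2+2\|g_t\|_*\sum_{s\in\mathcal U_t}\|g_s\|_*\Big). \]
   Context: Let $\mathcal V$ be a finite-dimensional real vector space with norm $\|\cdot\|$ and dual norm $\|\cdot\|_*$, and let $\mathcal X\subset\mathcal V$ be closed and convex. A regularizer is a function $h:\mathcal V\to\mathbb R\cup\{+\infty\}$ that is lower semicontinuous, $1$-strongly convex with respect to $\|\cdot\|$ on $\mathcal X$, satisfies $\mathcal X\subset\operatorname{dom}h$, whose subdifferential admits a continuous selection, and which is nonnegative ($h\ge0$). Protocol: there are one or several agents; at each round $t=1,\dots,T$ exactly one agent $i(t)$ is active, plays $x_t\in\mathcal X$ and incurs $f_t(x_t)$, where $f_t:\mathcal V\to\mathbb R\cup\{+\infty\}$ is convex with $\mathcal X\subset\operatorname{dom}\partial f_t$; a subgradient $g_t\in\partial f_t(x_t)$ is revealed at some later moment (possibly at different times to different agents). For an agent $i$ and time $t$, $\mathcal S^i_t\subset\{1,\dots,t-1\}$ is the set of timestamps $s$ such that $g_s$ is available to agent $i$ at time $t$, with $\mathcal S^i_t\subset\mathcal S^i_{t+1}$. Set $\mathcal S_t=\mathcal S^{i(t)}_t$ and $\mathcal U_t=\{1,\dots,t-1\}\setminus\mathcal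 S_t$. DDA: $x_t=\arg\min_{x\in\mathcal X}\big\{\sum_{s\in\mathcal S_t}\langle g_s,x\rangle+h(x)/\eta_t\big\}$. Regret: $R_T(p)=\sum_{t=1}^Tf_t(x_t)-\sum_{t=1}^Tf_t(p)$. *)

From HB Require Import structures.
From mathcomp Require Import all_boot all_order all_algebra.
From mathcomp Require Import all_classical all_reals all_analysis.
Set Implicit Arguments. Unset Strict Implicit. Unset Printing Implicit Defensive.
Import Order.TTheory GRing.Theory Num.Theory.
Import numFieldNormedType.Exports.
Local Open Scope classical_set_scope.
Local Open Scope ring_scope.

(* The space V is 'rV[R]_n (finite dimensional real vector space); its dual is
   identified with 'rV[R]_n through the standard pairing <g, x>. *)
Definition pair {R : realType} {n : nat} (g x : 'rV[R]_n) : R :=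
  \sum_(i < n) g 0 i * x 0 i.

Definition is_norm {R : realType} {n : nat} (N : 'rV[R]_n -> R) : Prop :=
  [/\ (forall x, N x = 0 -> x = 0),
      (forall (a : R) x, N (a *: x) = `|a| * N x) &
      (forall x y, N (x + y) <= N x + N y)].

Definition dual_norm {R : realType} {n : nat} (N : 'rV[R]_n -> R)
  (g : 'rV[R]_n) : R := sup [set pair g x | x in [set x | N x <= 1]].

Definition convex_subset {R : realType} {n : nat} (X : set 'rV[R]_n) : Prop :=
  forall x y (l : R), X x -> X y -> 0 <= l <= 1 -> X (l *: x + (1 - l) *: y).

Definition convex_efun {R : realType} {n : nat} (f : 'rV[R]_n -> \bar R) : Prop :=
  (forall x, f x != -oo%E) /\
  forall x y (l : R), 0 < l < 1 ->
    (f (l *: x + (1 - l) *: y)%R <= l%:E * f x + (1 - l)%:E * f y)%E.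

Definition edom {R : realType} {n : nat} (f : 'rV[R]_n -> \bar R) : set 'rV[R]_n :=
  [set x | (f x < +oo)%E].

Definition subdiff {R : realType} {n : nat} (f : 'rV[R]_n -> \bar R)
  (x : 'rV[R]_n) : set 'rV[R]_n :=
  [set g | f x \is a fin_num /\ forall y, (f x + (pair g (y - x)%R)%:E <= f y)%E].

Definition dom_subdiff {R : realType} {n : nat} (f : 'rV[R]_n -> \bar R)
  : set 'rV[R]_n := [set x | exists g, subdiff f x g].

Definition strongly_convex_on {R : realType} {n : nat} (N : 'rV[R]_n -> R)
  (X : set 'rV[R]_n) (h : 'rV[R]_n -> \bar R) : Prop :=
  forall x y (l : R), X x -> X y -> 0 <= l <= 1 ->
    (h (l *: x + (1 - l) *: y)%R <=
       l%:E * h x + (1 - l)%:E * h y - (l * (1 - l) / 2 * N (x - y)%R ^+ 2)%:E)%E.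

Definition regularizer {R : realType} {n : nat} (N : 'rV[R]_n -> R)
  (X : set 'rV[R]_n) (h : 'rV[R]_n -> \bar R) : Prop :=
  [/\ lower_semicontinuous h,
      strongly_convex_on N X h,
      X `<=` edom h,
      (exists s : 'rV[R]_n -> 'rV[R]_n,
          (forall x, dom_subdiff h x -> subdiff h x (s x)) /\
          {within dom_subdiff h, continuous s}) &
      (forall x, (0 <= h x)%E)].

From HB Require Import structures.
From mathcomp Require Import all_boot all_order all_algebra.
From mathcomp Require Import all_classical all_reals all_analysis.
From mathcomp Require Import lra ring.
Set Implicit Arguments. Unset Strict Implicit. Unset Printing Implicit Defensive.
Import Order.TTheory GRing.Theory Num.Theory.
Import numFieldNormedType.Exports.
Local Open Scope classical_set_scope.
Local Open Scope ring_scope.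

(* Induction on t, with the hypothesis quantified over every comparator w and
   applied at a point z of the segment [x_t, w].  The DDA objective of round t
   is (1/eta_t)-strongly convex and minimised at x_t, so it grows quadratically
   away from x_t; the undelayed objective differs from it by the gradients g_s,
   s in U_t, which cost at most ||g_s||_* N(w - x_t).  Placing z suitably trades
   these linear costs against the quadratic growth and leaves the error
   eta_t (||g_t||_*^2 + 2 ||g_t||_* sum_(s in U_t) ||g_s||_* ) / 2 per round;
   non-increasing rates let the term h(w) / eta_t be carried forward. *)

Section Pairing.
Variables (R : realType) (n : nat).
Implicit Types (g u v : 'rV[R]_n) (a : R).

Lemma pairD g u v : pair g (u + v) = pair g u + pair g v.
Proof. by rewrite /pair -big_split; apply: eq_bigr => i _; rewrite mxE mulrDr. Qed.

Lemma pairZ g a v : pair g (a *: v) = a * pair g v.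
Proof. by rewrite /pair mulr_sumr; apply: eq_bigr => i _; rewrite mxE mulrCA. Qed.

Lemma pair0 g : pair g 0 = 0.
Proof. by rewrite -(scale0r 0) pairZ mul0r. Qed.

Lemma pairB g u v : pair g (u - v) = pair g u - pair g v.
Proof. by rewrite pairD -scaleN1r pairZ mulN1r. Qed.

Section SumPair.
Variables (gs : nat -> 'rV[R]_n) (r : seq nat) (P : pred nat).

Lemma sum_pairB u v :
  \sum_(s <- r | P s) pair (gs s) (u - v) =
  \sum_(s <- r | P s) pair (gs s) u - \sum_(s <- r | P s) pair (gs s) v.
Proof. by rewrite -sumrB; apply: eq_bigr => s _; rewrite pairB. Qed.

Lemma sum_pair_mix a u v :
  \sum_(s <- r | P s) pair (gs s) (a *: u + (1 - a) *: v) =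
  a * \sum_(s <- r | P s) pair (gs s) u + (1 - a) * \sum_(s <- r | P s) pair (gs s) v.
Proof.
by rewrite !mulr_sumr -big_split; apply: eq_bigr => s _; rewrite pairD !pairZ.
Qed.

End SumPair.
End Pairing.

Section NormFacts.
Variables (R : realType) (n : nat) (N : 'rV[R]_n -> R).
Hypothesis hN : is_norm N.

Lemma is_norm0 : N 0 = 0.
Proof. by case: hN => _ hZ _; rewrite -(scale0r 0) hZ normr0 mul0r. Qed.

Lemma is_normN v : N (- v) = N v.
Proof. by case: hN => _ hZ _; rewrite -scaleN1r hZ normrN normr1 mul1r. Qed.

Lemma is_norm_ge0 v : 0 <= N v.
Proof. by case: hN => _ _ hT; have := hT v (- v); rewrite subrr is_norm0 is_normN; lra. Qed.

Lemma is_norm_sum (I : Type) (r : seq I) (P : pred I) (F : I -> 'rV[R]_n) :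
  N (\sum_(i <- r | P i) F i) <= \sum_(i <- r | P i) N (F i).
Proof.
case: hN => _ _ hT; elim/big_ind2: _ => [|u a v b uA vB|//]; first by rewrite is_norm0.
exact: le_trans (hT _ _) (lerD uA vB).
Qed.

Lemma is_norm_distB u v : `|N u - N v| <= N (u - v).
Proof.
case: hN => _ _ hT; rewrite ler_norml; apply/andP; split.
  by have := hT (v - u) u; rewrite subrK -opprB is_normN; lra.
by have := hT (u - v) v; rewrite subrK; lra.
Qed.

Lemma is_norm_le_mx_norm : exists2 C, 0 <= C & forall v, N v <= C * `|v|.
Proof.
case: hN => _ hZ _; exists (\sum_(j < n) N (delta_mx 0 j)).
  by apply: sumr_ge0 => j _; exact: is_norm_ge0.
move=> v; rewrite {1}(row_sum_delta v); apply: le_trans (is_norm_sum _ _ _) _.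
rewrite mulr_suml; apply: ler_sum => j _; rewrite hZ mulrC.
apply: ler_wpM2l; first exact: is_norm_ge0.
by rewrite [leRHS]mx_normrE; apply/bigmax_geP; right; exists (0, j).
Qed.

Lemma is_norm_continuous : continuous N.
Proof.
have [C C0 NC] := is_norm_le_mx_norm.
move=> u; apply/(@cvgrPdist_le _ _ _ _ (nbhs_filter u)) => e e0.
apply/nbhs_ballP; exists (e / (C + 1)); first by rewrite /= divr_gt0 //; lra.
move=> v; rewrite -ball_normE /= ltr_pdivlMr; last by lra.
move=> uv; apply: le_trans (is_norm_distB u v) _; apply: le_trans (NC _) _.
by have := normr_ge0 (u - v); nra.
Qed.

(* [N] attains a positive minimum on the compact unit sphere of the max norm. *)
Lemma mx_norm_le_is_norm : exists2 c, 0 < c & forall v, `|v| <= c * N v.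
Proof.
case: hN => N_eq0 hZ _.
set sphere := [set v : 'rV[R]_n | `|v| = 1].
have normalize v : v != 0 -> sphere (`|v|^-1 *: v).
  by move=> v0; rewrite /sphere /= mx_normZ normfV normr_id mulVf // normr_eq0.
have [[m0 m0S]|sphere0] := pselect (sphere !=set0); last first.
  exists 1 => // v; have [->|v0] := eqVneq v 0; first by rewrite normr0 is_norm0 mulr0.
  by exfalso; apply: sphere0; exists (`|v|^-1 *: v); exact: normalize.
have sphere_compact : compact sphere.
  apply: bounded_closed_compact.
    by exists 1; split; [exact: num_real | move=> M M1 v /= ->; exact: ltW].
  have -> : sphere = Num.norm @^-1` [set x : R | x = 1] by [].
  by move: (@norm_continuous R 'rV[R]_n) => /continuous_closedP; apply; exact: closed_eq.
have [m mS m_min] := EVT_min_rV (ex_intro _ m0 m0S) sphere_compact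
  (continuous_subspaceT is_norm_continuous).
have Nm_gt0 : 0 < N m.
  rewrite lt_def is_norm_ge0 andbT; apply/eqP => /N_eq0 m_eq0.
  by move: mS; rewrite inE /sphere /= m_eq0 normr0 => /esym/eqP; rewrite oner_eq0.
exists (N m)^-1; first by rewrite invr_gt0.
move=> v; have [->|v0] := eqVneq v 0; first by rewrite normr0 is_norm0 mulr0.
have := m_min _ (mem_set (normalize v v0)); rewrite hZ normfV normr_id.
have v_gt0 : 0 < `|v| by rewrite normr_gt0.
by rewrite ler_pdivlMl // ler_pdivlMl // mulrC.
Qed.

Lemma dual_norm_has_sup g : has_sup [set pair g x | x in [set x | N x <= 1]].
Proof.
have [c c0 hc] := mx_norm_le_is_norm.
split; first by exists 0, 0; rewrite /= ?is_norm0 ?pair0.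
exists ((\sum_(i < n) `|g 0 i|) * c) => _ [v /= Nv <-].
apply: le_trans (_ : \sum_(i < n) `|g 0 i| * `|v| <= _).
  apply: ler_sum => i _; apply: le_trans (ler_norm _) _; rewrite normrM.
  by apply: ler_wpM2l => //; rewrite [leRHS]mx_normrE; apply/bigmax_geP; right; exists (0, i).
rewrite -mulr_suml; apply: ler_wpM2l; first exact: sumr_ge0.
by apply: le_trans (hc v) _; rewrite ler_piMr // ltW.
Qed.

Lemma dual_norm_ge0 g : 0 <= dual_norm N g.
Proof. by apply: sup_upper_bound (dual_norm_has_sup g) _ _; exists 0; rewrite /= ?is_norm0 ?pair0. Qed.

Lemma pair_le_dual_norm g v : pair g v <= dual_norm N g * N v.
Proof.
case: hN => N_eq0 hZ _.
have [Nv0|Nv_neq0] := eqVneq (N v) 0; first by rewrite (N_eq0 _ Nv0) pair0 is_norm0 mulr0.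
have Nv_gt0 : 0 < N v by rewrite lt_def Nv_neq0 is_norm_ge0.
rewrite -ler_pdivrMr // mulrC -pairZ.
apply: sup_upper_bound (dual_norm_has_sup g) _ _; exists ((N v)^-1 *: v) => //=.
by rewrite hZ ger0_norm ?mulVf // invr_ge0 ltW.
Qed.

End NormFacts.

Lemma ler_addM_itv01 (R : realFieldType) (a b d : R) :
  (forall l, 0 < l < 1 -> a <= b + l * d) -> a <= b.
Proof.
move=> le_ab; apply/ler_addgt0Pr => e e_gt0.
have D_gt0 : 0 < 2 * e + `|d| by have := normr_ge0 d; lra.
pose l := e / (2 * e + `|d|).
have l01 : 0 < l < 1.
  by rewrite divr_gt0 //= ltr_pdivrMr // mul1r; rewrite -subr_gt0; have := normr_ge0 d; lra.
apply: le_trans (le_ab l l01) _; rewrite lerD2l; apply: le_trans (ler_norm _) _.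
rewrite normrM ger0_norm; last by case/andP: l01 => /ltW.
by rewrite /l mulrAC ler_pdivrMr // ler_pM2l //; have := normr_ge0 d; lra.
Qed.

(* With [l = b / (a + b)] and [u = r / (a + b)] the left-hand side is
   [a (a + 2b) (u - u^2 / (2 eta))], and [u - u^2 / (2 eta) <= eta / 2]. *)
Lemma exists_mixing_weight (R : realFieldType) (eta a b r : R) :
  0 < eta -> 0 <= a -> 0 <= b ->
  exists2 l, 0 <= l <= 1 &
    a * r + (1 - l) * (b * r) - (1 - l ^+ 2) * (eta^-1 * (r ^+ 2 / 2))
      <= eta * (a ^+ 2 + 2 * a * b) / 2.
Proof.
move=> eta_gt0 a_ge0 b_ge0.
have [ab0|ab_neq0] := eqVneq (a + b) 0.
  have [-> ->] : a = 0 /\ b = 0 by lra.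
  exists 0; first by rewrite lexx ler01.
  have : 0 <= eta^-1 * (r ^+ 2 / 2).
    by apply: mulr_ge0; [rewrite invr_ge0 ltW | rewrite divr_ge0 ?sqr_ge0].
  lra.
have ab_gt0 : 0 < a + b by rewrite lt_def ab_neq0 addr_ge0.
exists (b / (a + b)).
  by rewrite divr_ge0 ?addr_ge0 //= ler_pdivrMr // mul1r lerDr.
set u := r / (a + b).
have -> : a * r + (1 - b / (a + b)) * (b * r)
          - (1 - (b / (a + b)) ^+ 2) * (eta^-1 * (r ^+ 2 / 2))
        = a * (a + 2 * b) * (u - eta^-1 * (u ^+ 2 / 2)).
  by rewrite /u; field; rewrite ab_neq0 gt_eqF.
have -> : eta * (a ^+ 2 + 2 * a * b) / 2 = a * (a + 2 * b) * (eta / 2) by field.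
apply: ler_wpM2l; first by apply: mulr_ge0 => //; lra.
have : 0 <= eta^-1 * ((u - eta) ^+ 2 / 2).
  by apply: mulr_ge0; [rewrite invr_ge0 ltW | rewrite divr_ge0 ?sqr_ge0].
have -> : eta^-1 * ((u - eta) ^+ 2 / 2) = eta / 2 - (u - eta^-1 * (u ^+ 2 / 2)).
  by field; rewrite gt_eqF.
lra.
Qed.

Section StrongConvexity.
Variables (R : realType) (n : nat) (N : 'rV[R]_n -> R) (X : set 'rV[R]_n).

Definition strongly_convex_fun_on (c : R) (F : 'rV[R]_n -> R) : Prop :=
  forall x y (l : R), X x -> X y -> 0 <= l <= 1 ->
    F (l *: x + (1 - l) *: y) <=
      l * F x + (1 - l) * F y - c * (l * (1 - l) / 2 * N (x - y) ^+ 2).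

Lemma nonneg_edom_fineK (h : 'rV[R]_n -> \bar R) y :
  X `<=` edom h -> (forall z, 0 <= h z)%E -> X y -> (fine (h y))%:E = h y.
Proof. by move=> domh h_ge0 Xy; rewrite fineK // ge0_fin_numE //; exact: domh. Qed.

Lemma strongly_convex_on_fine (h : 'rV[R]_n -> \bar R) :
  convex_subset X -> X `<=` edom h -> (forall z, 0 <= h z)%E ->
  strongly_convex_on N X h -> strongly_convex_fun_on 1 (fine \o h).
Proof.
move=> convX domh h_ge0 sch y z l Xy Xz l01; have := sch y z l Xy Xz l01.
have fineK' u := @nonneg_edom_fineK h u domh h_ge0.
rewrite -(fineK' _ Xy) -(fineK' _ Xz) -(fineK' _ (convX _ _ _ Xy Xz l01)).
by rewrite -!EFinM -EFinD lee_fin mul1r.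
Qed.

Lemma strongly_convex_fun_on_add_affine (G F : 'rV[R]_n -> R) (c k : R) :
  0 <= k ->
  (forall x y (l : R), G (l *: x + (1 - l) *: y) = l * G x + (1 - l) * G y) ->
  strongly_convex_fun_on c F -> strongly_convex_fun_on (c * k) (fun y => G y + F y * k).
Proof.
move=> k_ge0 G_affine scF x y l Xx Xy l01; rewrite G_affine.
have := ler_wpM2r k_ge0 (scF x y l Xx Xy l01); lra.
Qed.

Lemma quadratic_growth_at_argmin (F : 'rV[R]_n -> R) (c : R) x w :
  convex_subset X -> strongly_convex_fun_on c F -> X x -> X w ->
  (forall y, X y -> F x <= F y) -> F x + c * (N (w - x) ^+ 2 / 2) <= F w.
Proof.
move=> convX scF Xx Xw x_min; set q := N (w - x) ^+ 2.
apply: (@ler_addM_itv01 _ _ _ (c * (q / 2))) => l /andP[l_gt0 l_lt1].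
have l01 : 0 <= l <= 1 by rewrite !ltW.
have := x_min _ (convX _ _ _ Xw Xx l01); have := scF _ _ _ Xw Xx l01.
rewrite -/q => le_mix le_min.
rewrite -subr_le0 -(pmulr_rle0 _ l_gt0); lra.
Qed.

End StrongConvexity.

Section DelayedDualAveraging.
Variables (R : realType) (n : nat) (N : 'rV[R]_n -> R) (X : set 'rV[R]_n).
Variables (hr : 'rV[R]_n -> R) (I : Type) (T : nat) (agent : nat -> I).
Variables (S : I -> nat -> pred nat) (x g : nat -> 'rV[R]_n) (eta : nat -> R).

Hypothesis hN : is_norm N.
Hypothesis convX : convex_subset X.
Hypothesis hr_ge0 : forall y, X y -> 0 <= hr y.
Hypothesis hr_sc : strongly_convex_fun_on N X 1 hr.
Hypothesis eta_gt0 : forall t, (1 <= t <= T)%N -> 0 < eta t.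
Hypothesis eta_noninc : forall t, (1 <= t < T)%N -> eta t.+1 <= eta t.

Definition dda_objective t y :=
  \sum_(1 <= s < t | S (agent t) t s) pair (g s) y + hr y / eta t.

Hypothesis x_in : forall t, (1 <= t <= T)%N -> X (x t).
Hypothesis x_argmin : forall t, (1 <= t <= T)%N ->
  forall y, X y -> dda_objective t (x t) <= dda_objective t y.

Definition delay_penalty t :=
  eta t * (dual_norm N (g t) ^+ 2 + 2 * dual_norm N (g t) *
             \sum_(1 <= s < t | ~~ S (agent t) t s) dual_norm N (g s)).

Lemma dda_step t C : (1 <= t <= T)%N ->
  (forall z, X z -> \sum_(1 <= s < t) pair (g s) (x s) <=
                    \sum_(1 <= s < t) pair (g s) z + hr z / eta t + C) ->
  forall w, X w -> \sum_(1 <= s < t.+1) pair (g s) (x s) <=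
    \sum_(1 <= s < t.+1) pair (g s) w + hr w / eta t + (C + delay_penalty t / 2).
Proof.
move=> t_in IH w Xw; have eta_t_gt0 := eta_gt0 t_in; have Xxt := x_in t_in.
have inv_eta_ge0 : 0 <= (eta t)^-1 by rewrite invr_ge0 ltW.
set a := dual_norm N (g t).
set b := \sum_(1 <= s < t | ~~ S (agent t) t s) dual_norm N (g s).
set r := N (w - x t).
have r_sym : N (x t - w) = r by rewrite -is_normN // opprB.
pose unseen y := \sum_(1 <= s < t | ~~ S (agent t) t s) pair (g s) y.
pose Phi y := \sum_(1 <= s < t) pair (g s) y + hr y / eta t.
have Phi_split y : Phi y = dda_objective t y + unseen y.
  by rewrite /Phi /dda_objective (bigID (S (agent t) t)) /= addrAC.
have Phi_sc : strongly_convex_fun_on N X (eta t)^-1 Phi.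
  rewrite -[(eta t)^-1]mul1r; apply: strongly_convex_fun_on_add_affine => // *.
  exact: sum_pair_mix.
have obj_sc : strongly_convex_fun_on N X (eta t)^-1 (dda_objective t).
  rewrite -[(eta t)^-1]mul1r; apply: strongly_convex_fun_on_add_affine => // *.
  exact: sum_pair_mix.
have growth := quadratic_growth_at_argmin convX obj_sc Xxt Xw (x_argmin t_in).
have unseen_le : unseen (x t) - unseen w <= b * r.
  rewrite /unseen -sum_pairB /b mulr_suml; apply: ler_sum => s _.
  by rewrite -r_sym; exact: pair_le_dual_norm.
have gain_le : pair (g t) (x t) - pair (g t) w <= a * r.
  by rewrite -pairB -r_sym; exact: pair_le_dual_norm.
have Phi_gap : Phi (x t) - Phi w <= b * r - (eta t)^-1 * (r ^+ 2 / 2).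
  by rewrite !Phi_split; move: growth; rewrite -/r; lra.
have b_ge0 : 0 <= b by apply: sumr_ge0 => s _; exact: dual_norm_ge0.
have [l l01 mix_le] := exists_mixing_weight r eta_t_gt0 (dual_norm_ge0 hN (g t)) b_ge0.
have gap_mix : (1 - l) * (Phi (x t) - Phi w) <= (1 - l) * (b * r - (eta t)^-1 * (r ^+ 2 / 2)).
  by apply: ler_wpM2l => //; rewrite subr_ge0; case/andP: l01.
have := Phi_sc _ _ _ Xw Xxt l01; have := IH _ (convX Xw Xxt l01).
have t_ge1 : (1 <= t)%N by case/andP: t_in.
rewrite /Phi /delay_penalty -/a -/b -/r !big_nat_recr //= in gap_mix mix_le * => IHz sc_z.
lra.
Qed.

Lemma dda_cumulative j : (1 <= j <= T)%N -> forall w, X w ->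
  \sum_(1 <= t < j.+1) pair (g t) (x t) <=
  \sum_(1 <= t < j.+1) pair (g t) w + hr w / eta j +
  \sum_(1 <= t < j.+1) delay_penalty t / 2.
Proof.
elim: j => [//|j IH] /andP[_ jT] w Xw.
rewrite [X in _ + X]big_nat_recr //=; apply: dda_step => [|z Xz|//]; first by rewrite jT.
case: j IH jT => [_ T_ge1|j IH jT].
  by rewrite !big_geq // add0r addr0 divr_ge0 ?hr_ge0 // ltW // (@eta_gt0 1 T_ge1).
apply: le_trans (IH (ltnW jT) _ Xz) _; rewrite lerD2r lerD2l.
rewrite ler_wpM2l ?hr_ge0 // lef_pV2 ?posrE ?eta_gt0 ?(ltnW jT) //.
exact: eta_noninc.
Qed.

End DelayedDualAveraging.

Lemma subdiff_fine_le (R : realType) (n : nat) (f : 'rV[R]_n -> \bar R) x g y :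
  subdiff f x g -> f y \is a fin_num -> fine (f x) - fine (f y) <= pair g (x - y).
Proof.
move=> [fx_fin subgrad] fy_fin; have := subgrad y.
by rewrite -(fineK fx_fin) -(fineK fy_fin) -EFinD lee_fin !pairB; lra.
Qed.

Lemma sum_fin_numE (R : realType) (F : nat -> \bar R) m k :
  (forall i, (m <= i < k)%N -> F i \is a fin_num) ->
  (\sum_(m <= i < k) F i = (\sum_(m <= i < k) fine (F i))%:E)%E.
Proof. by move=> F_fin; rewrite -sumEFin; apply: eq_big_nat => i /F_fin/fineK ->. Qed.

Theorem theorem1 (R : realType) (n : nat) (N : 'rV[R]_n -> R)
  (X : set 'rV[R]_n) (h : 'rV[R]_n -> \bar R)
  (I : Type) (T : nat) (agent : nat -> I) (S : I -> nat -> pred nat)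
  (f : nat -> 'rV[R]_n -> \bar R) (x g : nat -> 'rV[R]_n) (eta : nat -> R)
  (p : 'rV[R]_n) :
  is_norm N ->
  closed X -> convex_subset X ->
  regularizer N X h ->
  (0 < T)%N ->
  (* losses *)
  (forall t, (1 <= t <= T)%N -> convex_efun (f t) /\ X `<=` dom_subdiff (f t)) ->
  (* information sets *)
  (forall i t s, (1 <= t <= T)%N -> S i t s -> (1 <= s < t)%N) ->
  (forall i t s, (1 <= t < T)%N -> S i t s -> S i t.+1 s) ->
  (* learning rates: positive and non-increasing *)
  (forall t, (1 <= t <= T)%N -> 0 < eta t) ->
  (forall t, (1 <= t < T)%N -> eta t.+1 <= eta t) ->
  (* revealed subgradients *)
  (forall t, (1 <= t <= T)%N -> subdiff (f t) (x t) (g t)) ->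
  (* DDA iterates *)
  (forall t, (1 <= t <= T)%N ->
     X (x t) /\
     forall y, X y ->
       ((\sum_(1 <= s < t | S (agent t) t s) pair (g s) (x t))%:E
          + h (x t) * (eta t)^-1%:E <=
        (\sum_(1 <= s < t | S (agent t) t s) pair (g s) y)%:E
          + h y * (eta t)^-1%:E)%E) ->
  X p ->
  ((\sum_(1 <= t < T.+1) f t (x t)) - (\sum_(1 <= t < T.+1) f t p) <=
     h p * (eta T)^-1%:E +
     (1 / 2 * \sum_(1 <= t < T.+1)
        eta t * (dual_norm N (g t) ^+ 2 +
                 2 * dual_norm N (g t) *
                   \sum_(1 <= s < t | ~~ S (agent t) t s) dual_norm N (g s)))%:E)%E.
Proof.
move=> hN _ convX [_ h_sc h_dom _ h_ge0] T_gt0 f_dom _ _ eta_gt0 eta_noninc g_sub dda Xp.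
have h_fineK y : X y -> (fine (h y))%:E = h y := nonneg_edom_fineK h_dom h_ge0.
have x_argmin t : (1 <= t <= T)%N -> forall y, X y ->
    dda_objective (fine \o h) agent S g eta t (x t) <=
    dda_objective (fine \o h) agent S g eta t y.
  move=> t_in y Xy; have [Xxt /(_ y Xy)] := dda t t_in.
  by rewrite -(h_fineK _ Xxt) -(h_fineK _ Xy) -!EFinM -!EFinD lee_fin.
have hr_ge0 y : X y -> 0 <= fine (h y) by move=> Xy; rewrite -lee_fin h_fineK.
have T_in : (1 <= T <= T)%N by rewrite T_gt0 leqnn.
have := dda_cumulative hN convX hr_ge0 (strongly_convex_on_fine convX h_dom h_ge0 h_sc)
  eta_gt0 eta_noninc (fun t t_in => (dda t t_in).1) x_argmin T_in Xp.
rewrite /delay_penalty /= => cumulative.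
have fx_fin t : (1 <= t < T.+1)%N -> f t (x t) \is a fin_num by move=> /g_sub[].
have fp_fin t : (1 <= t < T.+1)%N -> f t p \is a fin_num.
  by move=> /f_dom[_ /(_ p Xp)[? []]].
have linearized : \sum_(1 <= t < T.+1) fine (f t (x t)) - \sum_(1 <= t < T.+1) fine (f t p)
    <= \sum_(1 <= t < T.+1) pair (g t) (x t) - \sum_(1 <= t < T.+1) pair (g t) p.
  rewrite -!sumrB; apply: ler_sum_nat => t t_in; rewrite -pairB.
  exact: subdiff_fine_le (g_sub t t_in) (fp_fin t t_in).
rewrite (sum_fin_numE fx_fin) (sum_fin_numE fp_fin) -h_fineK //.
rewrite -EFinM -EFinB -EFinD lee_fin; rewrite -mulr_suml in cumulative.
lra.
Qed.
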